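(* For every elliptic modulus $\kappa\in[0,1)$ and every $n\in\mathbb{Z}$, the equation $$(-1)^n\kappa'\big(\mathrm{sc}_\kappa(x)+\mathrm{nc}_\kappa(x)\big)-2\,\mathrm{dc}_\kappa(x)=0$$ has no solution $x$ with $-K(\kappa)<x<K(\kappa)$.
   Context: $\kappa'=\sqrt{1-\kappa^2}$; $\mathrm{sn}_\kappa,\mathrm{cn}_\kappa,\mathrm{dn}_\kappa$ are the Jacobi elliptic functions with modulus $\kappa$, and Glaisher's notation is used: $\mathrm{sc}=\mathrm{sn}/\mathrm{cn}$, $\mathrm{nc}=1/\mathrm{cn}$, $\mathrm{dc}=\mathrm{dn}/\mathrm{cn}$. $K(\kappa)=\int_0^{\pi/2}(1-\kappa^2\sin^2\theta)^{-1/2}d\theta$ is the complete elliptic integral of the first kind. *)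

From Stdlib Require Import Reals ClassicalEpsilon.
From Coquelicot Require Import Coquelicot.
Open Scope R_scope.

Definition ellF (k phi : R) : R :=
  RInt (fun t => / sqrt (1 - k ^ 2 * (sin t) ^ 2)) 0 phi.

Definition ellK (k : R) : R := ellF k (PI / 2).

Definition kprime (k : R) : R := sqrt (1 - k ^ 2).

(* Jacobi amplitude: am_k(x) is the phi with F(phi, k) = x
   (unique for 0 <= k < 1, as F(., k) is then an increasing bijection R -> R). *)
Definition jam (k x : R) : R :=
  epsilon (inhabits 0) (fun phi => ellF k phi = x).

Definition jsn (k x : R) : R := sin (jam k x).
Definition jcn (k x : R) : R := cos (jam k x).
Definition jdn (k x : R) : R := sqrt (1 - k ^ 2 * (jsn k x) ^ 2).

Definition jsc (k x : R) : R := jsn k x / jcn k x.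
Definition jnc (k x : R) : R := / jcn k x.
Definition jdc (k x : R) : R := jdn k x / jcn k x.

(* On (-K, K) the amplitude stays in (-pi/2, pi/2), because F(., k) is odd and grows at
   least at unit speed; hence cn > 0 and |sn| < 1 there.  Multiplying by cn turns the
   equation into (-1)^n k' (1 + sn) = 2 dn, which is impossible since
   |k' (1 + sn)| < 2 k' <= 2 dn. *)
From Stdlib Require Import Reals ZArith Lra ClassicalEpsilon.
From Coquelicot Require Import Coquelicot.
Open Scope R_scope.

Definition ell_integrand (k t : R) : R := / sqrt (1 - k ^ 2 * sin t ^ 2).

Lemma ellF_RInt (k phi : R) : ellF k phi = RInt (ell_integrand k) 0 phi.
Proof. reflexivity. Qed.

Lemma ell_radicand_le_1 (k t : R) : 1 - k ^ 2 * sin t ^ 2 <= 1.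
Proof. pose proof (Rle_0_sqr (k * sin t)). unfold Rsqr in *. simpl. nra. Qed.

Lemma kprime_le_jdn (k x : R) : kprime k <= jdn k x.
Proof.
  unfold kprime, jdn. apply sqrt_le_1_alt.
  pose proof (SIN_bound (jam k x)). unfold jsn.
  assert (sin (jam k x) ^ 2 <= 1) by (simpl; nra).
  pose proof (pow2_ge_0 k). nra.
Qed.

Section EllipticIntegral.

Variable k : R.
Hypothesis hk : -1 < k < 1.

Lemma ell_radicand_pos (t : R) : 0 < 1 - k ^ 2 * sin t ^ 2.
Proof.
  pose proof (SIN_bound t).
  assert (sin t ^ 2 <= 1) by (simpl; nra).
  assert (k ^ 2 < 1) by (simpl; nra).
  pose proof (pow2_ge_0 (sin t)). nra.
Qed.

Lemma ell_integrand_ge_1 (t : R) : 1 <= ell_integrand k t.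
Proof.
  unfold ell_integrand. pose proof (ell_radicand_pos t).
  assert (0 < sqrt (1 - k ^ 2 * sin t ^ 2)) by (apply sqrt_lt_R0; lra).
  assert (sqrt (1 - k ^ 2 * sin t ^ 2) <= 1).
  { rewrite <- sqrt_1 at 2. apply sqrt_le_1_alt, ell_radicand_le_1. }
  rewrite <- Rinv_1 at 1. apply Rinv_le_contravar; lra.
Qed.

Lemma ell_integrand_continuous (t : R) : continuous (ell_integrand k) t.
Proof.
  apply (@ex_derive_continuous R_AbsRing R_NormedModule). unfold ell_integrand.
  pose proof (ell_radicand_pos t). auto_derive.
  split; [lra | split; [apply Rgt_not_eq, sqrt_lt_R0; lra | exact I]].
Qed.

Lemma ex_RInt_ell_integrand (a b : R) : ex_RInt (ell_integrand k) a b.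
Proof.
  apply (@ex_RInt_continuous R_CompleteNormedModule).
  intros; apply ell_integrand_continuous.
Qed.

Lemma is_derive_ellF (t : R) : is_derive (ellF k) t (ell_integrand k t).
Proof.
  apply is_derive_RInt with (a := 0).
  - apply filter_forall. intro b.
    apply (@RInt_correct R_CompleteNormedModule), ex_RInt_ell_integrand.
  - apply ell_integrand_continuous.
Qed.

Lemma continuity_ellF : continuity (ellF k).
Proof.
  intro t. apply continuity_pt_filterlim, (@ex_derive_continuous R_AbsRing R_NormedModule).
  eexists; apply is_derive_ellF.
Qed.

Lemma ellF_sub_ge (a b : R) : a <= b -> b - a <= ellF k b - ellF k a.
Proof.
  intro hab. rewrite !ellF_RInt.
  rewrite <- (RInt_Chasles _ 0 a b) by apply ex_RInt_ell_integrand.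
  assert (hle : RInt (fun _ => 1) a b <= RInt (ell_integrand k) a b).
  { apply RInt_le; auto using ex_RInt_const, ex_RInt_ell_integrand, ell_integrand_ge_1. }
  rewrite RInt_const in hle. cbn in *. unfold plus, mult in *. cbn in *. lra.
Qed.

Lemma ellF_opp (phi : R) : ellF k (- phi) = - ellF k phi.
Proof.
  rewrite !ellF_RInt.
  pose proof (RInt_comp_lin (ell_integrand k) (-1) 0 0 phi) as hsub.
  replace (-1 * 0 + 0) with 0 in hsub by ring.
  replace (-1 * phi + 0) with (- phi) in hsub by ring.
  rewrite <- hsub, <- (@RInt_opp R_CompleteNormedModule) by apply ex_RInt_ell_integrand.
  apply RInt_ext. intros t _. unfold ell_integrand.
  replace (-1 * t + 0) with (- t) by ring. rewrite sin_neg.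
  replace ((- sin t) ^ 2) with (sin t ^ 2) by ring.
  unfold scal, opp. cbn. unfold mult. cbn. ring.
Qed.

Lemma PI2_le_ellK : PI / 2 <= ellK k.
Proof.
  pose proof PI_RGT_0. pose proof (ellF_sub_ge 0 (PI / 2) ltac:(lra)) as hinc.
  pose proof (ellF_opp 0) as h0. rewrite Ropp_0 in h0.
  unfold ellK. lra.
Qed.

Lemma ellF_jam (x : R) : - ellK k <= x <= ellK k -> ellF k (jam k x) = x.
Proof.
  intro hx. unfold jam. apply epsilon_spec.
  destruct (IVT_gen (ellF k) (- (PI / 2)) (PI / 2) x continuity_ellF) as [phi [_ hphi]].
  - pose proof PI2_le_ellK. pose proof PI_RGT_0. rewrite ellF_opp. fold (ellK k).
    rewrite Rmin_left, Rmax_right; lra.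
  - exists phi; exact hphi.
Qed.

Lemma jam_bounds (x : R) : - ellK k < x < ellK k -> - (PI / 2) < jam k x < PI / 2.
Proof.
  intro hx. pose proof (ellF_jam x ltac:(lra)) as hF.
  assert (hopp : ellF k (- (PI / 2)) = - ellK k) by apply ellF_opp.
  split.
  - destruct (Rlt_or_le (- (PI / 2)) (jam k x)) as [h | h]; auto.
    pose proof (ellF_sub_ge _ _ h). lra.
  - destruct (Rlt_or_le (jam k x) (PI / 2)) as [h | h]; auto.
    pose proof (ellF_sub_ge _ _ h). unfold ellK in hx. lra.
Qed.

End EllipticIntegral.

Lemma jcn_jsn_bounds (k x : R) :
  - (PI / 2) < jam k x < PI / 2 -> 0 < jcn k x /\ -1 < jsn k x < 1.
Proof.
  intro h. unfold jcn, jsn. pose proof PI_RGT_0.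
  split; [apply cos_gt_0; lra |].
  assert (sin (- (PI / 2)) = -1) by (rewrite sin_neg, sin_PI2; ring).
  pose proof (sin_increasing_1 (- (PI / 2)) (jam k x)).
  pose proof (sin_increasing_1 (jam k x) (PI / 2)).
  rewrite sin_PI2 in *. lra.
Qed.

Lemma kprime_pos (k : R) : -1 < k < 1 -> 0 < kprime k.
Proof. intro hk. apply sqrt_lt_R0. simpl. nra. Qed.

Lemma Rabs_powerRZ_m1 (n : Z) : Rabs (powerRZ (-1) n) = 1.
Proof.
  destruct n; simpl.
  - apply Rabs_R1.
  - apply pow_1_abs.
  - rewrite Rabs_inv, pow_1_abs. apply Rinv_1.
Qed.

Lemma sc_nc_dc_combination (a k x : R) :
  a * (jsc k x + jnc k x) - 2 * jdc k x = (a * (jsn k x + 1) - 2 * jdn k x) / jcn k x.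
Proof. unfold jsc, jnc, jdc, Rdiv. ring. Qed.

(* |p c (s + 1)| < 2 c <= 2 d *)
Lemma signed_factor_neq (p c d s : R) :
  Rabs p <= 1 -> 0 < c -> c <= d -> -1 < s < 1 -> p * c * (s + 1) <> 2 * d.
Proof.
  intros hp hc hcd hs. apply Rlt_not_eq.
  apply Rle_lt_trans with (Rabs (p * c * (s + 1))); [apply Rle_abs |].
  rewrite !Rabs_mult, (Rabs_pos_eq c), (Rabs_pos_eq (s + 1)) by lra.
  rewrite Rmult_assoc.
  assert (0 < c * (s + 1)) by (apply Rmult_lt_0_compat; lra).
  assert (c * (s + 1) < 2 * c) by nra.
  assert (Rabs p * (c * (s + 1)) <= 1 * (c * (s + 1))) by (apply Rmult_le_compat_r; lra).
  lra.
Qed.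

Theorem mainTheorem12 :
  forall (k : R) (n : Z), 0 <= k < 1 ->
  ~ (exists x : R, - ellK k < x < ellK k /\
      powerRZ (-1) n * kprime k * (jsc k x + jnc k x) - 2 * jdc k x = 0).
Proof.
  intros k n hk [x [hx heq]].
  assert (hk' : -1 < k < 1) by lra.
  destruct (jcn_jsn_bounds k x (jam_bounds k hk' x hx)) as [hcn hsn].
  rewrite sc_nc_dc_combination in heq.
  apply (signed_factor_neq (powerRZ (-1) n) (kprime k) (jdn k x) (jsn k x)).
  - rewrite Rabs_powerRZ_m1. lra.
  - apply kprime_pos, hk'.
  - apply kprime_le_jdn.
  - exact hsn.
  - unfold Rdiv in heq. apply Rmult_integral in heq as [h | h]; [lra |].
    exfalso. apply (Rinv_neq_0_compat (jcn k x)); lra.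
Qed.
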